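(* Let $3\le d\le 50$, let $(\alpha,\beta)\in\mathcal{A}_d$, let $\ell>1000$ be a prime, and let $(y_1,y_2)$ be integers satisfying \[ 4\beta y_2^\ell-\alpha^2 y_1^{2\ell}=d^2-1 . \] Suppose $|y_1|\ge 2$, $y_2\ge 2$ and $y_2\ne y_1^2$. Let $\alpha_1=4\beta/\alpha^2$ and $\alpha_2=y_1^2/y_2$. Then $\alpha_1$ and $\alpha_2$ are positive and multiplicatively independent. Moreover, writing $\Lambda=\log\alpha_1-\ell\log\alpha_2$, we have \[ 0<\Lambda<\frac{d^2-1}{\alpha^2 y_1^{2\ell}} . \]
   Context: For a prime $q$ let $\mu_q=\operatorname{ord}_q(d^2-1)$ and $\nu_q=\operatorname{ord}_q(d)$. To each prime $q$ associate a finite set $T_q\subset\mathbb{Z}^2$: if $q\nmid d(d^2-1)$, $T_q=\{(0,0)\}$. For $q=2$: $T_2=\{(0,1-\nu_2)\}$ if $2\mid d$; $T_2=\{(1,0),(\mu_2/2,1-\mu_2/2),(3-\mu_2,\mu_2-2)\}$ if $2\nmid d$ and $\mu_2$ is even; $T_2=\{(1,0),(3-\mu_2,\mu_2-2)\}$ if $2\nmid d$ and $\mu_2$ is odd. For odd $q\mid d$: $T_q=\{(-\nu_q,0),(0,-\nu_q)\}$. For odd $q\mid d^2-1$: $T_q=\{(0,0),(-\mu_q,\mu_q),(\mu_q/2,-\mu_q/2)\}$ if $\mu_q$ is even, and $T_q=\{(0,0),(-\mu_q,\mu_q)\}$ if $\mu_q$ is odd. Then $\mathcal{A}_d$ is the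 set of pairs of positive rationals $(\alpha,\beta)$ with $(\operatorname{ord}_q(\alpha),\operatorname{ord}_q(\beta))\in T_q$ for every prime $q$. *)

From HB Require Import structures.
From mathcomp Require Import all_boot all_order all_algebra.
From mathcomp Require Import all_classical all_reals all_analysis.
Set Implicit Arguments. Unset Strict Implicit. Unset Printing Implicit Defensive.
Import Order.TTheory GRing.Theory Num.Theory.
Local Open Scope ring_scope.

(* q-adic valuation of a rational number x (ord_q(0) = 0, irrelevant here
   since only positive rationals are considered). *)
Definition qval (q : nat) (x : rat) : int :=
  (logn q `|numq x|%N)%:Z - (logn q `|denq x|%N)%:Z.

Definition mu_ (d q : nat) : nat := logn q (d ^ 2 - 1)%N.
Definition nu_ (d q : nat) : nat := logn q d.

Definition inT (d q : nat) (p : int * int) : Prop :=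
  let mu := mu_ d q in let nu := nu_ d q in
  if ~~ (q %| d * (d ^ 2 - 1))%N then p = (0, 0)
  else if q == 2%N then
    (if (2 %| d)%N then p = (0, 1 - nu%:Z)
     else if ~~ odd mu then
       p = (1, 0) \/ p = ((mu./2)%:Z, 1 - (mu./2)%:Z) \/ p = (3 - mu%:Z, mu%:Z - 2)
     else p = (1, 0) \/ p = (3 - mu%:Z, mu%:Z - 2))
  else if (q %| d)%N then p = (- nu%:Z, 0) \/ p = (0, - nu%:Z)
  else
    if ~~ odd mu then p = (0, 0) \/ p = (- mu%:Z, mu%:Z) \/ p = ((mu./2)%:Z, - (mu./2)%:Z)
    else p = (0, 0) \/ p = (- mu%:Z, mu%:Z).

Definition in_A (d : nat) (alpha beta : rat) : Prop :=
  0 < alpha /\ 0 < beta /\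
  forall q : nat, prime q -> inT d q (qval q alpha, qval q beta).

Definition mult_indep (a b : rat) : Prop :=
  forall m n : int, a ^ m * b ^ n = 1 -> m = 0 /\ n = 0.

(* Put A = y1^2, B = y2 and D = d^2 - 1.  The equation says alpha1 = (1 + eps) alpha2^l
   with eps = D / (alpha^2 A^l) > 0, so Lambda = ln (1 + eps) lies strictly between 0 and eps.
   If alpha1 and alpha2 were multiplicatively dependent they would be integral powers of one
   g > 0, with g^t = A/B for some t != 0 and g^N = 1 + eps > 1.  Writing a rational root of
   A/B in lowest terms P/Q, Q divides A or B, which forces g^N >= 1 + 1/max(A, B).  On the
   other hand the valuation conditions defining A_d give alpha, beta >= 1/(d(d^2-1)), and
   as l > 1000 this makes eps < 1/max(A, B). *)

From HB Require Import structures.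
From mathcomp Require Import all_boot all_order all_algebra.
From mathcomp Require Import all_classical all_reals all_analysis.
From mathcomp Require Import ring lra zify.
Set Implicit Arguments. Unset Strict Implicit. Unset Printing Implicit Defensive.
Import Order.TTheory GRing.Theory Num.Theory.
Local Open Scope ring_scope.

Lemma ge0_divq_absz_num_den (r : rat) :
  0 <= r -> r = (`|numq r|%N)%:R / (`|denq r|%N)%:R.
Proof. by move=> r0; rewrite !natr_absz !ger0_norm ?divq_num_den ?numq_ge0. Qed.

Lemma expn_ratio_gap (e : rat) (k A B : nat) :
  1 < e -> (0 < k)%N -> (0 < B)%N -> e ^+ k = A%:R / B%:R -> 1 + (B%:R)^-1 <= e.
Proof.
move=> e_gt1 k_gt0 B_gt0 ekAB.
set P := `|numq e|%N; set Q := `|denq e|%N.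
have ePQ : e = P%:R / Q%:R by apply: ge0_divq_absz_num_den; lra.
have Q_gt0 : (0 < Q)%N by rewrite absz_gt0 denq_neq0.
have Q_lt_P : (Q < P)%N.
  by rewrite -(ltr_nat rat); move: e_gt1; rewrite ePQ ltr_pdivlMr ?mul1r ?ltr0n.
have AQ_BP : (A * Q ^ k = B * P ^ k)%N.
  apply/eqP; rewrite -(eqr_nat rat) !natrM !natrX [_ * P%:R ^+ k]mulrC.
  by rewrite -eqr_div ?expf_neq0 ?pnatr_eq0 -?lt0n // -expr_div_n -ePQ ekAB.
have Q_le_B : (Q <= B)%N.
  have QkB : (Q ^ k %| B)%N.
    rewrite -(@Gauss_dvdl _ _ (P ^ k)) -?AQ_BP ?dvdn_mull //.
    by rewrite coprimeXl // coprimeXr // coprime_sym coprime_num_den.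
  by apply: leq_trans (dvdn_leq B_gt0 QkB); rewrite -{1}(expn1 Q) leq_pexp2l.
have QB_le1 : (B%:R)^-1 * Q%:R <= 1 :> rat.
  by rewrite mulrC ler_pdivrMr ?ltr0n // mul1r ler_nat.
have : Q%:R + 1 <= P%:R :> rat by rewrite natr1 ler_nat.
rewrite ePQ ler_pdivlMr ?ltr0n // mulrDl mul1r; lra.
Qed.

Lemma exprz_ratio_gap (e : rat) (j : int) (A B : nat) :
  1 < e -> j != 0 -> (0 < A)%N -> (0 < B)%N -> e ^ j = A%:R / B%:R ->
  1 + ((maxn A B)%:R)^-1 <= e.
Proof.
move=> e_gt1 j_neq0 A_gt0 B_gt0 ejAB.
suff [gapA | gapB] : 1 + (A%:R)^-1 <= e \/ 1 + (B%:R)^-1 <= e.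
- apply: le_trans gapA; rewrite lerD2l lef_pV2 ?posrE ?ltr0n ?ler_nat ?leq_maxl //.
  by rewrite (leq_trans A_gt0) ?leq_maxl.
- apply: le_trans gapB; rewrite lerD2l lef_pV2 ?posrE ?ltr0n ?ler_nat ?leq_maxr //.
  by rewrite (leq_trans B_gt0) ?leq_maxr.
case: j j_neq0 ejAB => k k_neq0 ekAB.
- by right; apply: (expn_ratio_gap e_gt1 _ B_gt0 ekAB); rewrite lt0n.
- left; apply: (expn_ratio_gap (A := B) e_gt1 (ltn0Sn k) A_gt0).
  by rewrite -[B%:R / _]invf_div -ekAB NegzE -invr_expz invrK.
Qed.

Lemma exprz_gt1_ratio_gap (g : rat) (t N : int) (A B : nat) :
  0 < g -> t != 0 -> 1 < g ^ N -> (0 < A)%N -> (0 < B)%N -> g ^ t = A%:R / B%:R ->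
  1 + ((maxn A B)%:R)^-1 <= g ^ N.
Proof.
wlog g_gt1 : g t N / 1 < g => [base g_gt0 t_neq0 gN_gt1 A_gt0 B_gt0 gtAB|].
  have [g_lt1 | g_gt1 | g_eq1] := ltgtP g 1.
  - have -> : g ^ N = g^-1 ^ (- N) by rewrite exprz_inv opprK.
    apply: (base _ (- t)); rewrite ?invf_gt1 ?invr_gt0 ?oppr_eq0 ?exprz_inv ?opprK //.
  - exact: (base _ t).
  - by move: gN_gt1; rewrite g_eq1 exp1rz ltxx.
move=> _ t_neq0 gN_gt1 A_gt0 B_gt0 gtAB.
apply: le_trans (exprz_ratio_gap g_gt1 t_neq0 A_gt0 B_gt0 gtAB) _.
rewrite -[X in X <= _]expr1z ler_eXz2l //.
by move: gN_gt1; rewrite -(expr0z g) ltr_eXz2l.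
Qed.

Lemma exprz_dep_common_base (F : numFieldType) (a b : F) (m n : int) :
  0 < a -> 0 < b -> a ^ m * b ^ n = 1 -> (m != 0) || (n != 0) ->
  exists g : F, exists s t : int, [/\ 0 < g, a = g ^ s & b = g ^ t].
Proof.
move=> a_gt0 b_gt0 ab_eq1 mn_neq0.
have a_unit : a \is a GRing.unit by rewrite unitfE gt_eqF.
have b_unit : b \is a GRing.unit by rewrite unitfE gt_eqF.
pose c := gcdz m n; have c_neq0 : c != 0 by rewrite gcdz_eq0 negb_and.
pose m' := (m %/ c)%Z; pose n' := (n %/ c)%Z.
have m_eq : m = m' * c by rewrite divzK // dvdz_gcdl.
have n_eq : n = n' * c by rewrite divzK // dvdz_gcdr.
have ab'_eq1 : a ^ m' * b ^ n' = 1.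
  have : (a ^ m' * b ^ n') ^ c == 1.
    by rewrite exprzMl ?unitrXz // !exprz_exp -m_eq -n_eq ab_eq1.
  by rewrite pexprz_eq1 ?(negbTE c_neq0) ?mulr_ge0 ?exprz_ge0 ?ltW // => /eqP.
have bn'_eq : b ^ n' = a ^ (- m') by rewrite -invr_expz (mulr1_eq ab'_eq1).
have [u [v bezout]] := Bezoutz m n.
have bezout' : u * m' + v * n' = 1.
  by apply: (mulIf c_neq0); rewrite mul1r -[RHS]bezout m_eq n_eq; ring.
exists (a ^ v * b ^ (- u)), n', (- m'); split.
- by rewrite mulr_gt0 ?exprz_gt0.
- rewrite exprzMl ?unitrXz // !exprz_exp.
  have -> : b ^ (- u * n') = a ^ (u * m').
    by rewrite mulrC -(exprz_exp b) bn'_eq exprz_exp; congr (_ ^ _); ring.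
  by rewrite -exprzDr // -[LHS]expr1z -bezout'; congr (_ ^ _); ring.
- rewrite exprzMl ?unitrXz // !exprz_exp.
  have -> : a ^ (v * - m') = b ^ (v * n').
    by rewrite mulrC -(exprz_exp a) -bn'_eq exprz_exp; congr (_ ^ _); ring.
  by rewrite -exprzDr // -[LHS]expr1z -bezout'; congr (_ ^ _); ring.
Qed.

Lemma mult_indep_of_small_gap (A B l : nat) (x : rat) :
  (0 < A)%N -> (0 < B)%N -> A != B -> 0 < x -> x * (maxn A B)%:R < 1 ->
  mult_indep ((1 + x) * (A%:R / B%:R) ^+ l) (A%:R / B%:R).
Proof.
move=> A_gt0 B_gt0 A_neq_B x_gt0 x_small m n dep.
have [mn_neq0|] := boolP ((m != 0) || (n != 0)); last first.
  by rewrite negb_or !negbK => /andP[/eqP-> /eqP->].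
have b_gt0 : 0 < A%:R / B%:R :> rat by rewrite divr_gt0 ?ltr0n.
have a_gt0 : 0 < (1 + x) * (A%:R / B%:R) ^+ l.
  by rewrite mulr_gt0 ?exprn_gt0 // addr_gt0.
have [g [s [t [g_gt0 a_eq b_eq]]]] := exprz_dep_common_base a_gt0 b_gt0 dep mn_neq0.
have t_neq0 : t != 0.
  apply: contra_neq A_neq_B => t_eq0; move: b_eq; rewrite t_eq0 expr0z.
  by move/divr1_eq/eqP; rewrite eqr_nat => /eqP.
have g_unit : g \is a GRing.unit by rewrite unitfE gt_eqF.
have gap_eq : g ^ (s - t * l%:Z) = 1 + x.
  rewrite exprzDr // -invr_expz -exprz_exp -b_eq -a_eq -exprnP.
  by rewrite mulfK // expf_neq0 // gt_eqF.
have gN_gt1 : 1 < g ^ (s - t * l%:Z) by rewrite gap_eq ltrDl.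
have M_gt0 : 0 < (maxn A B)%:R :> rat by rewrite ltr0n (leq_trans A_gt0) ?leq_maxl.
have := exprz_gt1_ratio_gap g_gt0 t_neq0 gN_gt1 A_gt0 B_gt0 (esym b_eq).
rewrite gap_eq lerD2l -(ler_pM2r M_gt0) mulVf ?gt_eqF //.
by move=> /(lt_le_trans x_small); rewrite ltxx.
Qed.

Lemma inT_ge_neg_logn (d q : nat) (a b : int) :
  (2 <= d)%N -> prime q -> inT d q (a, b) ->
  - (logn q (d * (d ^ 2 - 1)))%:Z <= a /\ - (logn q (d * (d ^ 2 - 1)))%:Z <= b.
Proof.
move=> d_ge2 q_prime; rewrite /inT /mu_ /nu_.
have d2_gt1 : (0 < d ^ 2 - 1)%N by nia.
rewrite lognM ?(leq_trans _ d_ge2) //.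
set mu := logn q (d ^ 2 - 1); set nu := logn q d.
have half_mu : (mu./2 <= mu)%N by rewrite -{2}(odd_double_half mu); lia.
case: ifP => [_ [-> ->] | q_dvd]; first by lia.
case: ifP => [/eqP q2 | _]; last first.
  by case: ifP => _; [|case: ifP => _]; do ![case=> -> -> | case]; lia.
case: ifP => [_ [-> ->] | d_odd]; first by lia.
have mu_gt0 : (0 < mu)%N.
  rewrite logn_gt0 mem_primes q_prime d2_gt1 /=.
  by move/negbFE: q_dvd; rewrite q2 Euclid_dvdM // d_odd.
by case: ifP => _; do ![case=> -> -> | case]; lia.
Qed.

Lemma ge_invn_of_qval (r : rat) (K : nat) :
  0 < r -> (0 < K)%N -> (forall q, prime q -> - (logn q K)%:Z <= qval q r) ->
  (K%:R)^-1 <= r.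
Proof.
move=> r_gt0 K_gt0 qval_ge.
set P := `|numq r|%N; set Q := `|denq r|%N.
have Q_gt0 : (0 < Q)%N by rewrite absz_gt0 denq_neq0.
have logQ_le : forall p, (logn p Q <= logn p K)%N.
  move=> p; case p_prime: (prime p); last by rewrite lognE p_prime.
  have [logP_eq0 | logP_gt0] := posnP (logn p P).
    by have := qval_ge p p_prime; rewrite /qval -/P -/Q logP_eq0; lia.
  have p_dvd_P : (p %| P)%N by move: logP_gt0; rewrite logn_gt0 mem_primes => /and3P[].
  by rewrite logn_coprime // (coprime_dvdl p_dvd_P (coprime_num_den r)).
have Q_dvd_K : (Q %| K)%N.
  suff <- : gcdn Q K = Q by rewrite dvdn_gcdr.
  apply: eqn_from_log; rewrite ?gcdn_gt0 ?Q_gt0 // => p.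
  by rewrite logn_gcd // (minn_idPl (logQ_le p)).
have P_ge1 : 1 <= P%:R :> rat.
  by rewrite ler1n absz_gt0 numq_eq0 gt_eqF.
rewrite (ge0_divq_absz_num_den (ltW r_gt0)) -/P -/Q.
apply: le_trans (_ : (Q%:R)^-1 <= _).
  by rewrite lef_pV2 ?posrE ?ltr0n // ler_nat dvdn_leq.
by rewrite ler_pdivlMr ?ltr0n // mulVf ?pnatr_eq0 -?lt0n.
Qed.

Lemma in_A_ge_inv (d : nat) (alpha beta : rat) :
  (2 <= d)%N -> in_A d alpha beta ->
  ((d * (d ^ 2 - 1))%:R)^-1 <= alpha /\ ((d * (d ^ 2 - 1))%:R)^-1 <= beta.
Proof.
move=> d_ge2 [alpha_gt0 [beta_gt0 inT_all]].
have K_gt0 : (0 < d * (d ^ 2 - 1))%N by nia.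
have val_ge q q_prime := inT_ge_neg_logn d_ge2 q_prime (inT_all q q_prime).
by split; apply: ge_invn_of_qval => // q q_prime; case: (val_ge q q_prime).
Qed.

Lemma cube_mul_lt_expn (K Q l : nat) :
  (K <= 2 ^ 18)%N -> (2 <= Q)%N -> (1000 < l)%N -> (K ^ 3 * Q < Q ^ l)%N.
Proof.
move=> K_le Q_ge2; case: l => // l l_gt.
rewrite (expnSr Q l) ltn_pmul2r ?(ltnW Q_ge2) //.
apply: (@leq_ltn_trans ((2 ^ 18) ^ 3)); first by rewrite leq_exp2r.
apply: (@leq_trans (2 ^ l)); first by rewrite -expnM ltn_exp2l //; lia.
by rewrite leq_exp2r //; lia.
Qed.

Section SmallDefect.

Variables (alpha beta : rat) (D K A B l : nat).
Hypotheses (D_gt0 : (0 < D)%N) (D_lt_K : (D < K)%N).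
Hypotheses (alpha_ge : (K%:R)^-1 <= alpha) (beta_ge : (K%:R)^-1 <= beta).
Hypotheses (A_gt0 : (0 < A)%N) (B_gt0 : (0 < B)%N).
Hypotheses (A_large : (K ^ 3 * A < A ^ l)%N) (B_large : (K ^ 3 * B < B ^ l)%N).
Hypothesis eq_D : 4 * beta * B%:R ^+ l - alpha ^+ 2 * A%:R ^+ l = D%:R.

Local Notation k := (K%:R : rat).
Local Notation eps := (D%:R / (alpha ^+ 2 * A%:R ^+ l)).

Let k_gt0 : 0 < k. Proof. by rewrite ltr0n (leq_ltn_trans _ D_lt_K). Qed.

Let mul_k_ge1 (c : rat) : k^-1 <= c -> 1 <= c * k.
Proof. by rewrite -ler_pdivrMr // div1r. Qed.

Let alpha_gt0 : 0 < alpha.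
Proof. by apply: lt_le_trans alpha_ge; rewrite invr_gt0. Qed.

Let beta_gt0 : 0 < beta.
Proof. by apply: lt_le_trans beta_ge; rewrite invr_gt0. Qed.

Let denom_gt0 : 0 < alpha ^+ 2 * A%:R ^+ l.
Proof. by rewrite mulr_gt0 ?exprn_gt0 ?ltr0n. Qed.

Lemma eps_gt0 : 0 < eps.
Proof. by rewrite divr_gt0 ?ltr0n. Qed.

Lemma eps_mulA_lt1 : eps * A%:R < 1.
Proof.
rewrite mulrAC ltr_pdivrMr // mul1r.
have A_gt0' : 0 < A%:R :> rat by rewrite ltr0n.
have Al : k ^+ 3 * A%:R < A%:R ^+ l by rewrite -natrX -natrM -natrX ltr_nat.
have Dk : D%:R < k by rewrite ltr_nat.
have ak := mul_k_ge1 alpha_ge.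
(* D A < k A <= alpha^2 k^3 A < alpha^2 A^l *)
have p1 : 0 < (k - D%:R) * A%:R by rewrite mulr_gt0 // subr_gt0.
have p2 : 0 <= ((alpha * k) ^+ 2 - 1) * (k * A%:R).
  by apply: mulr_ge0; rewrite ?subr_ge0 ?exprn_ege1 // mulr_ge0 ?ltW.
have p3 : 0 < alpha ^+ 2 * (A%:R ^+ l - k ^+ 3 * A%:R).
  by rewrite mulr_gt0 ?exprn_gt0 // subr_gt0.
lra.
Qed.

Lemma eps_mulB_lt1 : eps * B%:R < 1.
Proof.
have eq_denom : alpha ^+ 2 * A%:R ^+ l = 4 * beta * B%:R ^+ l - D%:R.
  by rewrite -eq_D; ring.
rewrite mulrAC ltr_pdivrMr // mul1r eq_denom.
have b_ge1 : 1 <= B%:R :> rat by rewrite ler1n.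
have k_ge1 : 1 <= k by rewrite ler1n (leq_ltn_trans _ D_lt_K).
have Bl : k ^+ 3 * B%:R < B%:R ^+ l by rewrite -natrX -natrM -natrX ltr_nat.
have Dk : D%:R < k by rewrite ltr_nat.
have bk := mul_k_ge1 beta_ge.
(* D (B + 1) < k (B + 1) <= 2 k B <= 2 beta k^2 B <= 2 beta k^3 B < 2 beta B^l < 4 beta B^l *)
have q1 : 0 < (k - D%:R) * (B%:R + 1) by apply: mulr_gt0; lra.
have q2 : 0 <= k * (B%:R - 1) by apply: mulr_ge0; lra.
have q3 : 0 <= 2 * k * B%:R * (beta * k - 1).
  by apply: mulr_ge0; [rewrite !mulr_ge0 ?ler0n ?ltW | lra].
have q4 : 0 <= 2 * beta * k ^+ 2 * B%:R * (k - 1).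
  by apply: mulr_ge0; [rewrite !mulr_ge0 ?exprn_ge0 ?ler0n ?ltW | lra].
have q5 : 0 < 2 * beta * (B%:R ^+ l - k ^+ 3 * B%:R).
  by apply: mulr_gt0; rewrite ?subr_gt0 ?mulr_gt0.
have q6 : 0 < 2 * beta * B%:R ^+ l by rewrite !mulr_gt0 ?exprn_gt0 ?ltr0n.
lra.
Qed.

Lemma eps_mul_maxn_lt1 : eps * (maxn A B)%:R < 1.
Proof. by case: leqP => _; [exact: eps_mulB_lt1 | exact: eps_mulA_lt1]. Qed.

Lemma ratio_eq_eps_expn : 4 * beta / alpha ^+ 2 = (1 + eps) * (A%:R / B%:R) ^+ l.
Proof.
rewrite -eq_D expr_div_n; field.
by rewrite !expf_neq0 ?pnatr_eq0 -?lt0n // gt_eqF.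
Qed.

End SmallDefect.

Lemma ln_mul_expn_bounds (R : realType) (b x : R) (l : nat) :
  0 < b -> 0 < x -> 0 < ln ((1 + x) * b ^+ l) - l%:R * ln b < x.
Proof.
move=> b_gt0 x_gt0; have x1_gt0 : 0 < 1 + x by lra.
have -> : ln ((1 + x) * b ^+ l) - l%:R * ln b = ln (1 + x).
  by rewrite lnM ?posrE ?exprn_gt0 // lnXn // mulr_natl addrK.
rewrite ln_gt0 ?ltrDl //= -[ltRHS]expRK ltr_ln ?posrE ?expR_gt0 //.
by rewrite expR_gt1Dx // gt_eqF.
Qed.

Theorem lemma5p2 (R : realType) (d : nat) (alpha beta : rat) (l : nat)
    (y1 y2 : int) :
  (3 <= d <= 50)%N ->
  in_A d alpha beta ->
  prime l -> (1000 < l)%N ->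
  4 * beta * (y2%:~R) ^+ l - alpha ^+ 2 * (y1%:~R) ^+ (2 * l) = ((d ^ 2 - 1)%N)%:R :> rat ->
  2 <= `|y1| -> 2 <= y2 -> y2 != y1 ^+ 2 ->
  let alpha1 : rat := 4 * beta / alpha ^+ 2 in
  let alpha2 : rat := (y1 ^+ 2)%:~R / y2%:~R in
  [/\ 0 < alpha1, 0 < alpha2, mult_indep alpha1 alpha2 &
   let Lambda : R := ln (ratr alpha1) - l%:R * ln (ratr alpha2) in
   0 < Lambda /\
   Lambda < ratr (((d ^ 2 - 1)%N)%:R / (alpha ^+ 2 * (y1%:~R) ^+ (2 * l)))].
Proof.
move=> /andP[d_ge3 d_le50] inA _ l_gt eq_y y1_ge2 y2_ge2 y2_neq alpha1 alpha2.
pose A := `|y1 ^+ 2|%N; pose B := `|y2|%N.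
have A_eq : (y1 ^+ 2)%:~R = A%:R :> rat by rewrite natr_absz ger0_norm ?sqr_ge0.
have B_eq : y2%:~R = B%:R :> rat by rewrite natr_absz ger0_norm ?(le_trans _ y2_ge2).
have A_ge2 : (2 <= A)%N by rewrite /A abszX; nia.
have B_ge2 : (2 <= B)%N by rewrite /B; lia.
have [A_gt0 B_gt0] := (ltnW A_ge2, ltnW B_ge2).
have A_neq_B : A != B.
  by apply: contra_neq y2_neq => /(congr1 Posz); rewrite !gez0_abs ?sqr_ge0; lia.
have y1_pow : (y1%:~R : rat) ^+ (2 * l) = A%:R ^+ l by rewrite exprM -A_eq rmorphXn.
rewrite /alpha1 /alpha2 y1_pow A_eq B_eq; rewrite y1_pow B_eq in eq_y.
pose D := (d ^ 2 - 1)%N; pose K := (d * D)%N.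
have [D_gt0 D_lt_K K_le] : [/\ (0 < D)%N, (D < K)%N & (K <= 2 ^ 18)%N] by split; nia.
have [alpha_ge beta_ge] := in_A_ge_inv (ltnW d_ge3) inA.
have A_large := cube_mul_lt_expn K_le A_ge2 l_gt.
have B_large := cube_mul_lt_expn K_le B_ge2 l_gt.
have eps_pos := eps_gt0 l D_gt0 D_lt_K alpha_ge A_gt0.
rewrite (ratio_eq_eps_expn D_lt_K alpha_ge A_gt0 B_gt0 eq_y).
have b_gt0 : 0 < A%:R / B%:R :> rat by rewrite divr_gt0 ?ltr0n.
split => //; first by rewrite mulr_gt0 ?exprn_gt0 ?addr_gt0.
- apply: mult_indep_of_small_gap => //.
  exact: eps_mul_maxn_lt1 D_lt_K alpha_ge beta_ge A_gt0 B_gt0 A_large B_large eq_y.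
- rewrite rmorphM rmorphD rmorph1 rmorphXn.
  by apply/andP; apply: ln_mul_expn_bounds; rewrite ltr0q.
Qed.
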